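(* Let $(P,h)$ be a poset endowed with a height function $h$, and let $H$ be the maximal value of $h$. The generating series $\mathscr{Z}_{P,h} = \sum_{n \geq 0} \mathsf{Z}_{P,h}([n+1]_q)\, t^n$ can be expressed as a rational fraction: \begin{equation} \mathscr{Z}_{P,h} = \frac{\mathcal{H}_{P,h}(q,t)}{(1- t)(1-q t)\dots(1-q^{H} t)}, \end{equation} where $\mathcal{H}_{P,h}$ is a polynomial in $q, q^{-1}$ and $t$ with integer coefficients. The degree of $\mathcal{H}_{P,h}$ with respect to $t$ is at most $H$.
   Context: $P$ is a finite poset and $h : P \to \mathbb{N}$ is a height function, i.e. $h(x) < h(y)$ for every cover relation $x < y$ in $P$. We write $[n]_q = (q^n-1)/(q-1)$. The $q$-Zeta polynomial $\mathsf{Z}_{P,h}(x) \in \mathbb{Q}(q)[x]$ is the unique polynomial such that for every integer $n \geq 2$, $\mathsf{Z}_{P,h}([n]_q) = \sum_{e_1 \leq \dots \leq e_{n-1}} q^{\sum_j h(e_j)}$, the sum running over all (weak) multichains $e_1 \leq \dots \leq e_{n-1}$ of elements of $P$; its degree is $H$, and its value at $[1]_q=1$ is the Euler characteristic of the order complex of $P$. The polynomial $\mathcal{H}_{P,h}$ is defined as the numerator appearing in this statement. *)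

From HB Require Import structures.
From mathcomp Require Import all_boot all_order all_algebra.
Set Implicit Arguments. Unset Strict Implicit. Unset Printing Implicit Defensive.
Import Order.TTheory GRing.Theory Num.Theory.
Local Open Scope ring_scope.

Definition Qq : fieldType := {fraction {poly int}}.
Definition qvar : Qq := tofrac ('X : {poly int}).
Definition qnum (n : nat) : Qq := (qvar ^+ n - 1) / (qvar - 1).

Section Poset.
Context {d : Order.disp_t} {T : finPOrderType d}.

Definition is_cover (x y : T) : bool :=
  (x < y)%O && [forall z : T, ~~ ((x < z)%O && (z < y)%O)].

Definition height_fun (h : T -> nat) : Prop :=
  forall x y : T, is_cover x y -> (h x < h y)%N.

Definition maxh (h : T -> nat) : nat := \max_(x : T) h x.

Definition multichain_sum (h : T -> nat) (m : nat) : Qq :=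
  \sum_(e : {ffun 'I_m -> T} |
          [forall i : 'I_m, forall j : 'I_m, (i <= j)%N ==> (e i <= e j)%O])
     qvar ^+ (\sum_(j < m) h (e j)).

Definition is_qZeta (h : T -> nat) (Z : {poly Qq}) : Prop :=
  forall n : nat, (2 <= n)%N -> Z.[qnum n] = multichain_sum h n.-1.
End Poset.

Definition qdenom (H : nat) : {poly Qq} := \prod_(i < H.+1) (1 - qvar ^+ i *: 'X).

(* The Laurent polynomial q^{-a} * Hp(q,t), Hp in Z[q][t], viewed in Q(q)[t] *)
Definition laurent_poly (a : nat) (Hp : {poly {poly int}}) : {poly Qq} :=
  map_poly (fun c : {poly int} => tofrac c / qvar ^+ a) Hp.

(* Equality of formal power series in Q(q)[[t]]:
   sum_n s n t^n = N / D, i.e. D * (sum_n s n t^n) = N coefficientwise. *)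
Definition series_eq_frac (s : nat -> Qq) (N D : {poly Qq}) : Prop :=
  forall k : nat, (D * \poly_(n < k.+1) s n)`_k = N`_k.

From HB Require Import structures.
From mathcomp Require Import all_boot all_order all_algebra.
From mathcomp Require Import ring zify.
Set Implicit Arguments. Unset Strict Implicit. Unset Printing Implicit Defensive.
Import Order.TTheory GRing.Theory Num.Theory.
Local Open Scope ring_scope.

(* Let W_x(t) = \sum_m W_m(x) t^m, where W_m(x) is the q-weighted sum over the
   multichains of length m lying above x.  Splitting off the first element of a
   multichain gives (1 - q^(h x) t) W_x = 1 + t \sum_(z > x) q^(h z) W_z, and h is
   strictly increasing, so by downward induction (1 - q^(h x) t)...(1 - q^H t) W_x
   is a polynomial in t of degree at most H - h x.  Since Z([m+2]_q) =
   \sum_x q^(h x) W_m(x), multiplying the series by the denominator leaves a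
   polynomial of degree at most H + 1.  Its coefficient of t^(H+1+m) is a fixed
   polynomial evaluated at [m+1]_q which vanishes for every m >= 1, hence also for
   m = 0.  All coefficients of the series lie in Z[q] except Z(1), and the vanishing
   of the t^(H+1) coefficient, whose factor in front of Z(1) is
   +-q^(H(H+1)/2), puts Z(1) in Z[q, q^-1]. *)

Lemma qvarXn n : qvar ^+ n = tofrac ('X^n : {poly int}).
Proof. by rewrite /qvar rmorphXn. Qed.

Lemma qvarXn_neq0 n : qvar ^+ n != 0.
Proof. by rewrite qvarXn tofrac_eq0 monic_neq0 ?monicXn. Qed.

Lemma qvarXn_inj : injective (GRing.exp qvar).
Proof.
move=> m n /eqP; rewrite !qvarXn tofrac_eq => /eqP.
by move=> /(congr1 (size : {poly int} -> nat)); rewrite !size_polyXn => -[].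
Qed.

Lemma qvar_neq1 : qvar != 1.
Proof. by apply/eqP => q1; move: (@qvarXn_inj 1 0); rewrite expr1 expr0 q1 => /(_ erefl). Qed.

Lemma qnumD m n : qnum (m + n) = qvar ^+ n * qnum m + qnum n.
Proof. by rewrite /qnum mulrA -mulrDl exprD; congr (_ / _); ring. Qed.

Lemma qnum_inj : injective qnum.
Proof.
move=> m n; rewrite /qnum => /(mulIf (invr_neq0 _)).
by rewrite subr_eq0 qvar_neq1 => /(_ isT) /addIr /qvarXn_inj.
Qed.

Lemma poly_qnum_roots_eq0 (P : {poly Qq}) : (forall m, P.[qnum m.+2] = 0) -> P = 0.
Proof.
move=> Proots; apply/eqP; apply: contraT => nzP.
have := max_poly_roots nzP (rs := [seq qnum m.+2 | m <- iota 0 (size P)]).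
rewrite size_map size_iota ltnn; apply.
  by apply/allP => y /mapP [m _ ->]; apply/rootP.
by rewrite map_inj_uniq ?iota_uniq // => m n /qnum_inj [].
Qed.

Section SeriesProduct.
Variable R : nzRingType.
Implicit Types (p r : {poly R}) (a : nat -> R).

Definition pconv p a k : R := \sum_(i < k.+1) p`_i * a (k - i)%N.

Lemma pconvE p a k n : (k < n)%N -> pconv p a k = (p * \poly_(i < n) a i)`_k.
Proof.
move=> lt_kn; rewrite coefM; apply: eq_bigr => i _.
by rewrite coef_poly (leq_ltn_trans (leq_subr _ _) lt_kn).
Qed.

Lemma eq_pconv p a b : a =1 b -> pconv p a =1 pconv p b.
Proof. by move=> eq_ab k; apply: eq_bigr => i _; rewrite eq_ab. Qed.

Lemma pconvM r p a k : pconv (r * p) a k = pconv r (pconv p a) k.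
Proof.
rewrite (pconvE _ _ (ltnSn k)) -mulrA coefM; apply: eq_bigr => i _.
by rewrite (pconvE _ _ (_ : k - i < k.+1)%N) // ltnS leq_subr.
Qed.

Lemma pconvS p a k : pconv p a k.+1 = p`_k.+1 * a 0%N + pconv p (fun n => a n.+1) k.
Proof.
rewrite /pconv big_ord_recr /= subnn addrC; congr (_ + _).
by apply: eq_bigr => i _; rewrite subSn // -ltnS.
Qed.

Lemma pconv_subXS c a k : pconv (1 - c *: 'X) a k.+1 = a k.+1 - c * a k.
Proof.
rewrite (pconvE _ _ (ltnSn k.+1)) mulrBl mul1r -scalerAl coefB coefZ coefXM /=.
by rewrite !coef_poly !ltnS leqnn ltnW.
Qed.

Lemma pconv_widen p a n k : (size p <= n)%N -> (n <= k.+1)%N ->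
  pconv p a k = \sum_(i < n) p`_i * a (k - i)%N.
Proof.
move=> size_p le_nk; rewrite /pconv (big_ord_widen _ (fun i => p`_i * a (k - i)%N) le_nk).
rewrite [LHS](bigID (fun i : 'I_k.+1 => (i < n)%N)) /= [X in _ + X]big1 ?addr0 //.
by move=> i; rewrite -leqNgt => le_ni; rewrite nth_default ?mul0r // (leq_trans size_p).
Qed.

Lemma pconvM_eq0 r p a m n k : (size r <= m.+1)%N ->
  (forall j, (n < j)%N -> pconv p a j = 0) -> (m + n < k)%N -> pconv (r * p) a k = 0.
Proof.
move=> size_r pa_eq0 lt_k; rewrite pconvM; apply: big1 => i _.
have [le_im|lt_mi] := leqP i m; last by rewrite nth_default ?mul0r // (leq_trans size_r).
by rewrite pa_eq0 ?mulr0 //; have := ltn_ord i; lia.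
Qed.

Lemma size_prod_subX (I : Type) (r : seq I) (c : I -> R) :
  (size (\prod_(i <- r) (1 - c i *: 'X : {poly R}))%R <= (size r).+1)%N.
Proof.
elim: r => [|i r IHr]; first by rewrite big_nil size_poly1.
rewrite big_cons /=; apply: leq_trans (size_polyMleq _ _) _.
have size_lin : (size (1 - c i *: 'X : {poly R})%R <= 2)%N.
  apply: leq_trans (size_polyD _ _) _; rewrite geq_max size_poly1 size_polyN.
  by rewrite (leq_trans (size_scale_leq _ _)) // size_polyX.
by rewrite -subn1 leq_subLR (leq_trans (leq_add size_lin IHr)).
Qed.

End SeriesProduct.

Lemma pconv_sum (R : comNzRingType) (I : finType) (P : pred I) (p : {poly R})
    (c : I -> R) (a : I -> nat -> R) k :
  pconv p (fun n => \sum_(i | P i) c i * a i n) k = \sum_(i | P i) c i * pconv p (a i) k.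
Proof.
rewrite /pconv; under eq_bigr do rewrite mulr_sumr.
rewrite exchange_big; apply: eq_bigr => i _; rewrite mulr_sumr.
by apply: eq_bigr => j _; rewrite mulrCA.
Qed.

Lemma series_eq_fracE s N D : series_eq_frac s N D <-> forall k, pconv D s k = N`_k.
Proof. by split=> eqN k; rewrite -eqN (pconvE _ _ (ltnSn k)). Qed.

Definition qprod (a b : nat) : {poly Qq} := \prod_(a <= c < b) (1 - qvar ^+ c *: 'X).

Lemma qdenomE H : qdenom H = qprod 0 H.+1.
Proof. by rewrite /qprod big_mkord. Qed.

Lemma size_qprod a b : (size (qprod a b) <= (b - a).+1)%N.
Proof. by have := size_prod_subX (index_iota a b) (GRing.exp qvar); rewrite size_iota. Qed.

Lemma qprod_cat a b c : (a <= b <= c)%N -> qprod a c = qprod a b * qprod b c.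
Proof. by case/andP => le_ab le_bc; rewrite /qprod (big_cat_nat le_ab le_bc). Qed.

Lemma qprod_ltn a b : (a < b)%N -> qprod a b = qprod a.+1 b * (1 - qvar ^+ a *: 'X).
Proof. by move=> lt_ab; rewrite /qprod big_ltn // mulrC. Qed.

Lemma coef_qprod0n n : (qprod 0 n)`_n = (-1) ^+ n * qvar ^+ (\sum_(0 <= i < n) i)%N.
Proof.
elim: n => [|n IHn]; first by rewrite /qprod !big_geq // coef1 mul1r.
rewrite /qprod !big_nat_recr //= mulrBr mulr1 coefB -scalerAr coefZ coefMX /=.
rewrite -/(qprod 0 n) IHn nth_default; last by rewrite (leq_trans (size_qprod _ _)) ?subn0.
by rewrite exprS exprD sub0r; ring.
Qed.

Lemma pconv_horner_qnum (Z D : {poly Qq}) N : (size D <= N.+1)%N ->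
  exists P : {poly Qq}, forall m, pconv D (fun n => Z.[qnum n.+1]) (m + N) = P.[qnum m.+1].
Proof.
move=> size_D; exists (\sum_(i < N.+1) D`_i *: (Z \Po (qvar ^+ (N - i) *: 'X + (qnum (N - i))%:P))).
move=> m; rewrite (pconv_widen _ size_D); last by rewrite ltnS leq_addl.
rewrite horner_sum; apply: eq_bigr => i _.
rewrite hornerZ horner_comp hornerD hornerZ hornerX hornerC -qnumD.
by congr (_ * Z.[qnum _]); have := ltn_ord i; lia.
Qed.

Definition qintegral (x : Qq) : Prop := exists p : {poly int}, x = tofrac p.

Lemma qintegralN x : qintegral x -> qintegral (- x).
Proof. by move=> [p ->]; exists (- p); rewrite rmorphN. Qed.

Lemma qintegralM x y : qintegral x -> qintegral y -> qintegral (x * y).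
Proof. by move=> [p ->] [r ->]; exists (p * r); rewrite rmorphM. Qed.

Lemma qintegral_sum (I : finType) (P : pred I) (F : I -> Qq) :
  (forall i, P i -> qintegral (F i)) -> qintegral (\sum_(i | P i) F i).
Proof.
apply: big_ind => [|_ _ [p ->] [r ->]]; first by exists 0; rewrite rmorph0.
by exists (p + r); rewrite rmorphD.
Qed.

Lemma qintegral_qvarXn n : qintegral (qvar ^+ n).
Proof. by exists 'X^n; rewrite qvarXn. Qed.

Lemma qintegral_sign n : qintegral ((-1) ^+ n).
Proof. by exists ((-1) ^+ n); rewrite rmorphXn rmorphN1. Qed.

Lemma qintegral_coef_qdenom H i : qintegral (qdenom H)`_i.
Proof.
suff -> : qdenom H = map_poly (@tofrac _) (\prod_(c < H.+1) (1 - 'X^c *: 'X) : {poly {poly int}}).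
  by exists (\prod_(c < H.+1) (1 - 'X^c *: 'X))`_i; rewrite coef_map_id0 ?rmorph0.
rewrite rmorph_prod; apply: eq_bigr => c _.
by rewrite rmorphB rmorph1 -!mul_polyC rmorphM /= map_polyC map_polyX qvarXn.
Qed.

Section Multichains.
Context {d : Order.disp_t} {T : finPOrderType d}.

Definition multichain m (e : {ffun 'I_m -> T}) : bool :=
  [forall i : 'I_m, forall j : 'I_m, (i <= j)%N ==> (e i <= e j)%O].

Definition ffun_cons m (x : T) (g : {ffun 'I_m -> T}) : {ffun 'I_m.+1 -> T} :=
  [ffun i => if unlift ord0 i is Some j then g j else x].

Lemma ffun_cons0 m x (g : {ffun 'I_m -> T}) : ffun_cons x g ord0 = x.
Proof. by rewrite ffunE unlift_none. Qed.

Lemma ffun_consS m x (g : {ffun 'I_m -> T}) j : ffun_cons x g (lift ord0 j) = g j.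
Proof. by rewrite ffunE liftK. Qed.

Lemma ffun_cons_bij m : bijective (fun p : T * {ffun 'I_m -> T} => ffun_cons p.1 p.2).
Proof.
exists (fun f : {ffun 'I_m.+1 -> T} => (f ord0, [ffun j => f (lift ord0 j)])).
  by case=> x g; rewrite /= ffun_cons0; congr pair; apply/ffunP => j; rewrite ffunE ffun_consS.
by move=> f; apply/ffunP => i; rewrite ffunE /=; case: unliftP => [j ->|->]; rewrite ?ffunE.
Qed.

Lemma multichain_cons m (P : pred T) x (g : {ffun 'I_m -> T}) :
    (forall y z, P y -> (y <= z)%O -> P z) ->
  (multichain (ffun_cons x g) && [forall i, P (ffun_cons x g i)]) =
  [&& P x, multichain g & [forall i, (x <= g i)%O]].
Proof.
move=> P_up; apply/idP/idP.
  case/andP => /forallP mono_xg /forallP P_xg; rewrite -(ffun_cons0 x g) P_xg /=.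
  apply/andP; split; apply/forallP => i.
    apply/forallP => j; apply/implyP => le_ij.
    have /forallP/(_ (lift ord0 j)) := mono_xg (lift ord0 i).
    by rewrite !ffun_consS /= /bump !add1n ltnS le_ij.
  by have /forallP/(_ (lift ord0 i)) := mono_xg ord0; rewrite ffun_consS ffun_cons0.
case/and3P => Px /forallP mono_g /forallP x_le_g; apply/andP; split; last first.
  by apply/forallP => i; rewrite ffunE; case: unliftP => [j _|_] //; apply: P_up Px (x_le_g j).
apply/forallP => i; apply/forallP => j; apply/implyP; rewrite !ffunE.
case: (unliftP ord0 i) => [i' ->|->]; case: (unliftP ord0 j) => [j' ->|->] //=.
by rewrite /bump !add1n ltnS => le_ij; have /forallP/(_ j') := mono_g i'; rewrite le_ij.
Qed.

Variable h : T -> nat.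

Definition multichain_sum_in (P : pred T) m : Qq :=
  \sum_(e : {ffun 'I_m -> T} | multichain e && [forall i, P (e i)])
     qvar ^+ (\sum_(j < m) h (e j)).

Definition multichain_sum_ge (x : T) : nat -> Qq :=
  multichain_sum_in (fun z => (x <= z)%O).

Lemma multichain_sumE m : multichain_sum h m = multichain_sum_in predT m.
Proof.
apply: eq_bigl => e; suff -> : [forall i, predT (e i)] by rewrite andbT.
exact/forallP.
Qed.

Lemma multichain_sum_inS (P : pred T) m : (forall y z, P y -> (y <= z)%O -> P z) ->
  multichain_sum_in P m.+1 = \sum_(x | P x) qvar ^+ h x * multichain_sum_ge x m.
Proof.
move=> P_up; rewrite /multichain_sum_in (reindex _ (onW_bij _ (ffun_cons_bij m))).
under [RHS]eq_bigr do rewrite mulr_sumr.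
rewrite pair_big_dep; apply: eq_big => [[x g]|[x g] _] /=; first exact: multichain_cons.
rewrite big_ord_recl ffun_cons0 exprD; congr (_ * qvar ^+ _).
by apply: eq_bigr => j _; rewrite ffun_consS.
Qed.

Lemma multichain_sumS m : multichain_sum h m.+1 = \sum_x qvar ^+ h x * multichain_sum_ge x m.
Proof. by rewrite multichain_sumE multichain_sum_inS. Qed.

Lemma multichain_sum_geS x m :
  multichain_sum_ge x m.+1 = \sum_(z | (x <= z)%O) qvar ^+ h z * multichain_sum_ge z m.
Proof. by apply: multichain_sum_inS => y z; apply: le_trans. Qed.

Lemma pconv_multichain_sum_ge x m :
  pconv (1 - qvar ^+ h x *: 'X) (multichain_sum_ge x) m.+1 =
  \sum_(z | (x < z)%O) qvar ^+ h z * multichain_sum_ge z m.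
Proof.
rewrite pconv_subXS multichain_sum_geS (bigD1 x) //= addrC addrK.
by apply: eq_bigl => z; rewrite lt_def andbC.
Qed.

Hypothesis h_height : height_fun h.

Lemma height_fun_lt : {homo h : x y / (x < y)%O >-> (x < y)%N}.
Proof.
move=> x z; have [n] := ubnP #|[set w | (x < w)%O && (w < z)%O]|.
elim: n x z => // n IHn x z lt_card lt_xz.
have [/h_height //|] := boolP (is_cover x z).
rewrite /is_cover lt_xz /= => /forallPn [w]; rewrite negbK => /andP [lt_xw lt_wz].
have lt_card_sub a b : (x <= a)%O -> (b <= z)%O -> ~~ ((a < w) && (w < b))%O ->
    (#|[set v | (a < v)%O && (v < b)%O]| < n)%N.
  move=> le_xa le_bz w_notin; rewrite -ltnS (leq_trans _ lt_card) // ltnS; apply: proper_card.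
  apply/properP; split; last by exists w; rewrite !inE ?lt_xw ?lt_wz.
  apply/subsetP => v; rewrite !inE => /andP [lt_av lt_vb].
  by rewrite (le_lt_trans le_xa lt_av) (lt_le_trans lt_vb le_bz).
apply: (@ltn_trans (h w)); apply: IHn => //; apply: lt_card_sub;
  by rewrite ?lexx ?ltxx ?andbF ?(ltW lt_xw) ?(ltW lt_wz).
Qed.

Lemma leq_maxh x : (h x <= maxh h)%N.
Proof. exact: leq_bigmax_cond. Qed.

Lemma pconv_qprod_multichain_sum_ge x l k : (l <= h x)%N -> (maxh h - l < k)%N ->
  pconv (qprod l (maxh h).+1) (multichain_sum_ge x) k = 0.
Proof.
have [n] := ubnP (maxh h - h x); elim: n x l k => // n IHn x l k lt_n le_l lt_k.
have le_hx := leq_maxh x.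
suff at_hx : forall j, (maxh h - h x < j)%N ->
    pconv (qprod (h x) (maxh h).+1) (multichain_sum_ge x) j = 0.
  rewrite (@qprod_cat l (h x)); last by rewrite le_l leqW.
  by apply: (pconvM_eq0 (size_qprod _ _) at_hx); lia.
case=> // j lt_j.
rewrite qprod_ltn ?ltnS // pconvM pconvS nth_default; last first.
  by rewrite (leq_trans (size_qprod _ _)) //; lia.
rewrite mul0r add0r (eq_pconv _ (pconv_multichain_sum_ge x)) pconv_sum.
apply: big1 => z lt_xz; have lt_hxz := height_fun_lt lt_xz.
by rewrite IHn ?mulr0 //; have := leq_maxh z; lia.
Qed.

Lemma qintegral_multichain_sum_ge x m : qintegral (multichain_sum_ge x m).
Proof. by apply: qintegral_sum => e _; apply: qintegral_qvarXn. Qed.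

Section QZeta.
Variables (Z : {poly Qq}) (hZ : is_qZeta h Z).
Let s n := Z.[qnum n.+1].

Lemma qZeta_multichain_sum n : s n.+1 = \sum_x qvar ^+ h x * multichain_sum_ge x n.
Proof. by rewrite /s hZ // multichain_sumS. Qed.

Lemma pconv_qdenom_gt k : ((maxh h).+1 < k)%N -> pconv (qdenom (maxh h)) s k = 0.
Proof.
case: k => // k lt_k; rewrite qdenomE pconvS nth_default; last first.
  by rewrite (leq_trans (size_qprod _ _)) ?subn0.
rewrite mul0r add0r (eq_pconv _ qZeta_multichain_sum) pconv_sum.
apply: big1 => x _; rewrite (@qprod_cat 0 (h x)) ?leqW ?leq_maxh //.
rewrite (pconvM_eq0 (n := maxh h - h x) (size_qprod _ _)) ?mulr0 //.
  by move=> j; apply: pconv_qprod_multichain_sum_ge.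
by have := leq_maxh x; lia.
Qed.

Lemma pconv_qdenom_eq0 k : (maxh h < k)%N -> pconv (qdenom (maxh h)) s k = 0.
Proof.
have size_D : (size (qdenom (maxh h)) <= (maxh h).+2)%N.
  by rewrite qdenomE (leq_trans (size_qprod _ _)) ?subn0.
have [P eq_P] := pconv_horner_qnum Z size_D.
have P0 : P = 0.
  by apply: poly_qnum_roots_eq0 => m; rewrite -eq_P pconv_qdenom_gt //; lia.
rewrite leq_eqVlt => /orP [/eqP <-|]; last exact: pconv_qdenom_gt.
by rewrite -[(maxh h).+1]add0n eq_P P0 horner0.
Qed.

Lemma qintegral_pconv_qdenom :
  exists a, forall k, qintegral (pconv (qdenom (maxh h)) s k * qvar ^+ a).
Proof.
have qintegral_sS n : qintegral (s n.+1).
  rewrite qZeta_multichain_sum; apply: qintegral_sum => x _.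
  exact: qintegralM (qintegral_qvarXn _) (qintegral_multichain_sum_ge _ _).
pose a := (\sum_(0 <= i < (maxh h).+1) i)%N; exists a.
have qintegral_s n : qintegral (s n * qvar ^+ a).
  case: n => [|n]; last exact: qintegralM (qintegral_sS n) (qintegral_qvarXn _).
  have := pconv_qdenom_eq0 (ltnSn _).
  rewrite pconvS {1}qdenomE coef_qprod0n -/a => /eqP; rewrite addr_eq0 => /eqP eq_s0.
  rewrite -[_ * _](signrMK (maxh h).+1) [s 0 * _]mulrC [X in _ * X]mulrA eq_s0.
  apply: qintegralM (qintegral_sign _) (qintegralN (qintegral_sum _)) => i _.
  exact: qintegralM (qintegral_coef_qdenom _ _) (qintegral_sS _).
move=> k; rewrite /pconv mulr_suml; apply: qintegral_sum => i _; rewrite -mulrA.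
exact: qintegralM (qintegral_coef_qdenom _ _) (qintegral_s _).
Qed.

End QZeta.
End Multichains.

Theorem mainTheorem4 (d : Order.disp_t) (T : finPOrderType d) (h : T -> nat)
  (hh : height_fun h) (Z : {poly Qq}) (hZ : is_qZeta h Z) :
  exists (a : nat) (Hp : {poly {poly int}}),
    (size Hp <= (maxh h).+1)%N /\
    series_eq_frac (fun n => Z.[qnum n.+1]) (laurent_poly a Hp) (qdenom (maxh h)).
Proof.
have [a qintegral_num] := qintegral_pconv_qdenom hh hZ.
have num_lift k : exists p, pconv (qdenom (maxh h)) (fun n => Z.[qnum n.+1]) k * qvar ^+ a
    == tofrac p.
  by have [p ->] := qintegral_num k; exists p.
exists a, (\poly_(k < (maxh h).+1) xchoose (num_lift k)); split; first exact: size_poly.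
apply/series_eq_fracE => k; rewrite /laurent_poly coef_map_id0 ?rmorph0 ?mul0r // coef_poly.
case: ltnP => [_|le_k]; last by rewrite rmorph0 mul0r pconv_qdenom_eq0.
by rewrite -(eqP (xchooseP (num_lift k))) mulfK ?qvarXn_neq0.
Qed.
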